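(* Let $(Q,P)$ be a weakly quasi-lattice ordered group and let $\Lambda$ be a $P$-graph with $\mathrm{FA}(\Lambda)\neq\emptyset$. With $\mathcal{X}(\Lambda)*P=\{(x,m)\in\mathcal{X}(\Lambda)\times P: x\cap\Lambda^m\neq\emptyset\}$ and $\mathrm{dom}(m)=\{x\in\mathcal{X}(\Lambda): x\cap\Lambda^m\neq\emptyset\}$, the semigroup action $(\mathcal{X}(\Lambda),P,T)$, $T(x,m)=\{\mu\in\Lambda: x(0,m)\mu\in x\}$, is directed: for all $m,n\in P$ with $\mathrm{dom}(m)\cap\mathrm{dom}(n)\neq\emptyset$ there is $l\in P$ with $m,n\le l$ and $\mathrm{dom}(m)\cap\mathrm{dom}(n)\subseteq\mathrm{dom}(l)$.
   Context: $(Q,P)$ weakly quasi-lattice ordered: $Q$ a discrete group, $P\subseteq Q$ a subsemigroup containing the identity $e$ with $P\cap P^{-1}=\{e\}$, and, with $p\le r$ meaning $pq=r$ for some $q\in P$, any two elements of $P$ with a common upper bound have a least common upper bound. A $P$-graph is a countable small category $\Lambda$ (range/source $r,s$) with a functor $d:\Lambda\to P$ with unique factorisation (if $d(\lambda)=pq$ there are unique $\mu,\nu$ with $\lambda=\mu\nu$, $d(\mu)=p$, $d(\nu)=q$). Write $\Lambda^m=d^{-1}(m)$, $\lambda\Lambda=\{\lambda\mu: s(\lambda)=r(\mu)\}$, $\mu\preceq\lambda$ iff $\lambda\in\mu\Lambda$. $\mathrm{FA}(\Lambda)$ is the set of $\lambda$ such that for all $\mu\in\lambda\Lambda,\nu\in\Lambda$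 there is a finite $J\subseteq\Lambda$ with $\mu\Lambda\cap\nu\Lambda=\bigcup_{\kappa\in J}\kappa\Lambda$. A filter is a nonempty hereditary and directed subset of $\Lambda$ (w.r.t. $\preceq$); for a filter $x$, $d|_x$ is injective, and $x(0,m)$ denotes the unique element of $x\cap\Lambda^m$ when nonempty. Path space $\mathcal{X}(\Lambda)=\{x\text{ filter}: x\cap\mathrm{FA}(\Lambda)\neq\emptyset\}$. $(\mathcal{X}(\Lambda),P,T)$ is a semigroup action in the sense that $(x,e)\in\mathcal{X}(\Lambda)*P$ with $T(x,e)=x$, and $(x,mn)\in\mathcal{X}(\Lambda)*P$ iff $(x,m),(T(x,m),n)\in\mathcal{X}(\Lambda)*P$, with $T(T(x,m),n)=T(x,mn)$. *)

From Stdlib Require Import List.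
Set Implicit Arguments.
Unset Strict Implicit.

Record Group := {
  gcar :> Type;
  gmul : gcar -> gcar -> gcar;
  gone : gcar;
  ginv : gcar -> gcar;
  gmulA : forall a b c, gmul a (gmul b c) = gmul (gmul a b) c;
  gmul1 : forall a, gmul gone a = a;
  gmulV : forall a, gmul (ginv a) a = gone
}.

Section WQLO.
Variable Q : Group.

Definition positive_cone (P : Q -> Prop) : Prop :=
  P (@gone Q) /\
  (forall p q, P p -> P q -> P (gmul p q)) /\
  (forall p, P p -> P (ginv p) -> p = @gone Q).

Definition ple (P : Q -> Prop) (p r : Q) : Prop :=
  exists q, P q /\ gmul p q = r.

Definition wqlo (P : Q -> Prop) : Prop :=
  positive_cone P /\
  forall p q, P p -> P q ->
    (exists r, P r /\ ple P p r /\ ple P q r) ->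
    exists l, P l /\ ple P p l /\ ple P q l /\
      forall r, P r -> ple P p r -> ple P q r -> ple P l r.
End WQLO.

(* A P-graph: countable small category with degree functor d : Λ -> P
   satisfying unique factorisation.  Composition [comp λ μ] (written λμ)
   is meaningful when s λ = r μ. *)
Record PGraph (Q : Group) (P : Q -> Prop) := {
  Obj : Type;
  Mor : Type;
  rng : Mor -> Obj;
  src : Mor -> Obj;
  comp : Mor -> Mor -> Mor;
  idm : Obj -> Mor;
  rng_id : forall v, rng (idm v) = v;
  src_id : forall v, src (idm v) = v;
  rng_comp : forall l m, src l = rng m -> rng (comp l m) = rng l;
  src_comp : forall l m, src l = rng m -> src (comp l m) = src m;
  comp_id_l : forall l, comp (idm (rng l)) l = l;
  comp_id_r : forall l, comp l (idm (src l)) = l;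
  compA : forall a b c, src a = rng b -> src b = rng c ->
            comp a (comp b c) = comp (comp a b) c;
  Obj_countable : exists f : Obj -> nat, forall u v, f u = f v -> u = v;
  Mor_countable : exists f : Mor -> nat, forall u v, f u = f v -> u = v;
  deg : Mor -> Q;
  deg_P : forall l, P (deg l);
  deg_id : forall v, deg (idm v) = @gone Q;
  deg_comp : forall l m, src l = rng m -> deg (comp l m) = gmul (deg l) (deg m);
  fact_ex : forall l p q, P p -> P q -> deg l = gmul p q ->
    exists mu nu, src mu = rng nu /\ l = comp mu nu /\ deg mu = p /\ deg nu = q;
  fact_uniq : forall l mu nu mu' nu',
    src mu = rng nu -> l = comp mu nu ->
    src mu' = rng nu' -> l = comp mu' nu' ->
    deg mu = deg mu' -> deg nu = deg nu' -> mu = mu' /\ nu = nu'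
}.

Section PathSpace.
Variables (Q : Group) (P : Q -> Prop) (L : PGraph P).

Notation M := (Mor L).

(* λΛ = { λμ : s(λ) = r(μ) } *)
Definition ext (l : M) (k : M) : Prop :=
  exists m, src (p0:=L) l = rng (p0:=L) m /\ k = comp (p0:=L) l m.

Definition preceq (mu l : M) : Prop := ext mu l.

Definition FA (l : M) : Prop :=
  forall mu nu, ext l mu ->
    exists J : list M, forall k, (ext mu k /\ ext nu k) <->
                                 (exists kap, In kap J /\ ext kap k).

Definition filter (x : M -> Prop) : Prop :=
  (exists l, x l) /\
  (forall l mu, x l -> preceq mu l -> x mu) /\
  (forall l mu, x l -> x mu -> exists nu, x nu /\ preceq l nu /\ preceq mu nu).

Definition pathspace (x : M -> Prop) : Prop :=
  filter x /\ exists l, x l /\ FA l.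

Definition dom (m : Q) (x : M -> Prop) : Prop :=
  pathspace x /\ exists l, x l /\ deg (p0:=L) l = m.

Definition Tshift (x : M -> Prop) (m : Q) : M -> Prop :=
  fun mu => exists l, x l /\ deg (p0:=L) l = m /\ src (p0:=L) l = rng (p0:=L) mu /\ x (comp (p0:=L) l mu).

Definition directed_action : Prop :=
  forall m n, P m -> P n ->
    (exists x, dom m x /\ dom n x) ->
    exists l, P l /\ ple P m l /\ ple P n l /\
      forall x, dom m x -> dom n x -> dom l x.
End PathSpace.

(** A path [x] lying in both [dom m] and [dom n] contains paths of degrees [m]
    and [n]; since [x] is directed, it contains a common extension of them, whose
    degree is a common upper bound of [m] and [n].  So [m] and [n] have a least
    upper bound [l], and this [l] works for every [y] in [dom m ∩ dom n]: the same
    argument gives some [ν ∈ y] with [l ≤ d(ν)], and by unique factorisation [ν]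
    has an initial segment of degree [l], which lies in [y] because [y] is
    hereditary. *)

From Pilot Require Import Defs.
From Stdlib Require Import List.

Set Implicit Arguments.
Unset Strict Implicit.

Section FilterDegrees.
Variables (Q : Group) (P : Q -> Prop) (L : PGraph P).

Lemma deg_ple_of_preceq (mu lam : Mor L) :
  preceq mu lam -> ple P (deg mu) (deg lam).
Proof.
  intros [r [Hsr ->]].
  exists (deg r); split; [apply deg_P|].
  symmetry; apply deg_comp; exact Hsr.
Qed.

Lemma filter_deg_common_ub (x : Mor L -> Prop) (a b : Mor L) :
  Defs.filter x -> x a -> x b ->
  exists nu, x nu /\ ple P (deg a) (deg nu) /\ ple P (deg b) (deg nu).
Proof.
  intros [_ [_ Hdir]] Ha Hb.
  destruct (Hdir a b Ha Hb) as [nu [Hnu [Ha_nu Hb_nu]]].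
  exists nu; split; [exact Hnu|].
  split; apply deg_ple_of_preceq; assumption.
Qed.

Lemma dom_deg_common_ub (m n : Q) (x : Mor L -> Prop) :
  dom m x -> dom n x ->
  exists nu, x nu /\ ple P m (deg nu) /\ ple P n (deg nu).
Proof.
  intros [[Hfilter _] [a [Ha <-]]] [_ [b [Hb <-]]].
  exact (filter_deg_common_ub Hfilter Ha Hb).
Qed.

Lemma filter_has_deg_below (x : Mor L -> Prop) (nu : Mor L) (l : Q) :
  Defs.filter x -> x nu -> P l -> ple P l (deg nu) ->
  exists al, x al /\ deg al = l.
Proof.
  intros [_ [Hher _]] Hnu Pl [q [Pq Hlq]].
  destruct (fact_ex (p0:=L) Pl Pq (eq_sym Hlq))
    as [al [be [Hsrc [Hnu_eq [Hdal _]]]]].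
  exists al; split; [|exact Hdal].
  apply (Hher nu al Hnu).
  exists be; split; assumption.
Qed.

Lemma dom_of_deg_ub (l : Q) (x : Mor L -> Prop) (nu : Mor L) :
  pathspace x -> x nu -> P l -> ple P l (deg nu) -> dom l x.
Proof.
  intros Hpath Hnu Pl Hl.
  split; [exact Hpath|].
  exact (filter_has_deg_below (proj1 Hpath) Hnu Pl Hl).
Qed.

End FilterDegrees.

Theorem proposition5p10 (Q : Group) (P : Q -> Prop) (L : PGraph P) :
  wqlo P ->
  (exists l : Mor L, @FA Q P L l) ->
  @directed_action Q P L.
Proof.
  (* Nonemptiness of FA(Λ) only ensures that the path space is nonempty;
     directedness does not need it. *)
  intros [_ Hlub] _ m n Pm Pn [x [Hxm Hxn]].
  destruct (dom_deg_common_ub Hxm Hxn) as [nu [_ [Hm_nu Hn_nu]]].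
  destruct (Hlub m n Pm Pn (ex_intro _ (deg nu) (conj (deg_P nu) (conj Hm_nu Hn_nu))))
    as [l [Pl [Hml [Hnl Hleast]]]].
  exists l; split; [exact Pl|split; [exact Hml|split; [exact Hnl|]]].
  intros y Hym Hyn.
  destruct (dom_deg_common_ub Hym Hyn) as [nu' [Hnu' [Hm_nu' Hn_nu']]].
  apply (dom_of_deg_ub (proj1 Hym) Hnu' Pl).
  exact (Hleast (deg nu') (deg_P nu') Hm_nu' Hn_nu').
Qed.
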